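(* Let $G$ be a finite, simple, connected $(n-3)$-regular graph of order $n\ge 5$. Then $\gamma_P(G)=1$ if and only if there exists an edge $uv\in E(G)$ such that $|N[v]\setminus N[u]|=1$.
   Context: For $U\subseteq V(G)$, $cl(U)$ is obtained by coloring $U$ black and repeatedly applying: if a black vertex has exactly one white neighbor, that neighbor becomes black. $S$ is a power dominating set if $cl(N[S])=V(G)$; $\gamma_P(G)$ is the minimum size of a power dominating set. *)

From mathcomp Require Import all_boot.
Set Implicit Arguments. Unset Strict Implicit. Unset Printing Implicit Defensive.

Section Graph.
Variables (T : finType) (e : rel T).

Definition simple_graph : Prop := symmetric e /\ irreflexive e.

Definition onbhd (v : T) : {set T} := [set w | e v w].
Definition cnbhd (v : T) : {set T} := v |: onbhd v.
Definition cnbhd_set (S : {set T}) : {set T} := \bigcup_(v in S) cnbhd v.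

(* one round of the colour-change rule: every white vertex that is the
   unique white neighbour of some black vertex becomes black *)
Definition force_step (B : {set T}) : {set T} :=
  B :|: [set w | [exists v in B, onbhd v :\: B == [set w]]].

(* cl(U): repeat the rule until it stabilises (#|T| rounds suffice since
   each effective round adds a vertex) *)
Definition closure (U : {set T}) : {set T} := iter #|T| force_step U.

Definition power_dominating (S : {set T}) : bool :=
  closure (cnbhd_set S) == [set: T].

(* gamma_P(G) : minimum size of a power dominating set; every set has size
   <= #|T| and [set: T] is power dominating, so #|T| is a neutral default *)
Definition power_domination_number : nat :=
  \big[minn/#|T|]_(S : {set T} | power_dominating S) #|S|.

Definition connected_graph : Prop := forall x y : T, connect e x y.

Definition regular (k : nat) : Prop := forall v : T, #|onbhd v| = k.
End Graph.

From Pilot Require Import Defs.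
From mathcomp Require Import all_boot all_order.
From mathcomp Require Import zify.
Import Order.TTheory.

Set Implicit Arguments.
Unset Strict Implicit.
Unset Printing Implicit Defensive.

(* In an (n-3)-regular graph every closed neighbourhood N[u] misses exactly
   two vertices. If {u} power-dominates, some vertex of N[u] performs a force;
   it cannot be u, which has no neighbour outside N[u], so it is a neighbour v
   of u with N[v] \ N[u] a single vertex. Conversely such a v forces one of the
   two missing vertices, after which the other one, a, is the only white vertex
   and is forced by any of its neighbours. *)

Lemma cards2_set2 (T : finType) (A : {set T}) (x : T) :
  #|A| = 2 -> x \in A -> exists a, A = [set x; a].
Proof.
move=> cardA xA; have /cards1P [a Da] : #|A :\ x| == 1.
  by move: cardA; rewrite (cardsD1 x) xA; lia.
by exists a; rewrite -Da setD1K.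
Qed.

Section PowerDomination.
Variables (T : finType) (e : rel T).

Lemma subset_force_step (B : {set T}) : B \subset force_step e B.
Proof. exact: subsetUl. Qed.

Lemma force_stepT : force_step e [set: T] = [set: T].
Proof. by apply/eqP; rewrite eqEsubset subsetT subset_force_step. Qed.

Lemma iter_force_step_id (B : {set T}) (k : nat) :
  force_step e B = B -> iter k (force_step e) B = B.
Proof. by move=> fixB; elim: k => //= k ->. Qed.

Lemma closure_id (B : {set T}) : force_step e B = B -> Defs.closure e B = B.
Proof. exact: iter_force_step_id. Qed.

Lemma closure_eqT (B : {set T}) (k : nat) :
  k <= #|T| -> iter k (force_step e) B = [set: T] ->
  Defs.closure e B = [set: T].
Proof.
move=> le_k_T itB.
rewrite /Defs.closure -(subnK le_k_T) iterD itB.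
by rewrite iter_force_step_id ?force_stepT.
Qed.

Lemma cnbhd_set1 (u : T) : cnbhd_set e [set u] = cnbhd e u.
Proof. exact: big_set1. Qed.

Lemma cnbhdD_onbhd (u v : T) :
  v \in cnbhd e u -> cnbhd e v :\: cnbhd e u = onbhd e v :\: cnbhd e u.
Proof.
move=> vu; apply/setP => y; rewrite !inE; case: (eqVneq y v) => [-> | //].
by move: vu; rewrite !inE => ->.
Qed.

Lemma power_dominatingT : power_dominating e [set: T].
Proof.
have NT : cnbhd_set e [set: T] = [set: T].
  apply/eqP; rewrite eqEsubset subsetT; apply/subsetP => u _.
  by apply/bigcupP; exists u; rewrite ?inE ?eqxx.
by rewrite /power_dominating NT closure_id ?force_stepT.
Qed.

Lemma power_dominating0 : 0 < #|T| -> ~~ power_dominating e set0.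
Proof.
case/card_gt0P => t _; rewrite /power_dominating /cnbhd_set big_set0.
rewrite closure_id; first by apply/eqP => /setP/(_ t); rewrite !inE.
by apply/setP => y; rewrite !inE; apply/exists_inP => -[v]; rewrite inE.
Qed.

Lemma power_domination_number_min (S : {set T}) :
  power_dominating e S -> power_domination_number e <= #|S|.
Proof. exact: (@bigmin_le_cond _ nat _ #|T| S _ (fun S : {set T} => #|S|)). Qed.

Lemma power_domination_numberP :
  exists2 S, power_dominating e S & #|S| = power_domination_number e.
Proof.
have [S PS eqS] := @eq_bigmin _ _ _ #|T| _ _ (fun S : {set T} => #|S|)
  power_dominatingT (fun S _ => max_card S).
by exists S.
Qed.

Lemma power_domination_number_gt0 : 0 < #|T| -> 0 < power_domination_number e.
Proof.
move=> T_gt0; apply/(@bigmin_gtP _ nat); split=> // S PS.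
suff : 0 < #|S| by [].
by rewrite card_gt0; apply: contraTneq PS => ->; exact: power_dominating0.
Qed.

Lemma power_domination_number_eq1 :
  0 < #|T| ->
  power_domination_number e = 1 <-> exists u, power_dominating e [set u].
Proof.
move=> T_gt0; split.
  case: power_domination_numberP => S PS <- /eqP/cards1P [u Su].
  by exists u; rewrite -Su.
case=> u Pu; apply/eqP; rewrite eqn_leq power_domination_number_gt0 // andbT.
by rewrite -(cards1 u) power_domination_number_min.
Qed.

Lemma power_dominating_set1_edge (u : T) :
  cnbhd e u != [set: T] -> power_dominating e [set u] ->
  exists v, e u v /\ #|cnbhd e v :\: cnbhd e u| = 1.
Proof.
move=> Nu_neqT; rewrite /power_dominating cnbhd_set1 => /eqP clNu.
have /subsetPn [y] : ~~ (force_step e (cnbhd e u) \subset cnbhd e u).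
  apply: contra Nu_neqT => fixNu; rewrite -[X in _ == X]clNu closure_id //.
  by apply/eqP; rewrite eqEsubset fixNu subset_force_step.
rewrite in_setU in_set => /orP [-> // | /exists_inP [v vNu /eqP Dv] _].
have [vu | euv] := setU1P vNu.
  have := set11 y; rewrite -Dv vu !inE.
  by case: (e u y); rewrite ?orbT ?andbF.
rewrite inE in euv; exists v; split=> //.
by rewrite cnbhdD_onbhd // Dv cards1.
Qed.

Lemma force_step_cnbhd (u v x a : T) :
  v \in cnbhd e u -> ~: cnbhd e u = [set x; a] ->
  cnbhd e v :\: cnbhd e u = [set x] ->
  [set~ a] \subset force_step e (cnbhd e u).
Proof.
move=> vu Nu Dv; apply/subsetP => y; rewrite in_setC1 => ya.
have [yu | ] := boolP (y \in cnbhd e u).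
  exact: subsetP (subset_force_step _) _ yu.
rewrite -in_setC Nu !inE (negbTE ya) orbF => /eqP ->.
apply/orP; right; apply/exists_inP; exists v => //.
by rewrite -cnbhdD_onbhd // Dv.
Qed.

Lemma force_step_setC1 (B : {set T}) (a w : T) :
  symmetric e -> irreflexive e -> e a w -> [set~ a] \subset B ->
  force_step e B = [set: T].
Proof.
move=> esym eirr eaw sB; have Bw : w \in B.
  rewrite (subsetP sB) // in_setC1.
  by apply: contraTneq eaw => ->; rewrite eirr.
have [aB | aNB] := boolP (a \in B).
  suff -> : B = [set: T] by exact: force_stepT.
  apply/setP => y; rewrite inE; have [-> // | ya] := eqVneq y a.
  by rewrite (subsetP sB) ?in_setC1.
apply/setP => y; rewrite !inE.
have [-> | ya] := eqVneq y a; last by rewrite (subsetP sB) ?in_setC1.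
apply/orP; right; apply/exists_inP; exists w => //.
apply/eqP/setP => z; rewrite !inE; case: (eqVneq z a) => [-> | za].
  by rewrite aNB esym eaw.
by rewrite (subsetP sB) ?in_setC1.
Qed.

Lemma card_setC_cnbhd_regular (u : T) :
  irreflexive e -> 3 <= #|T| -> regular e (#|T| - 3) -> #|~: cnbhd e u| = 2.
Proof.
move=> eirr T_ge3 reg; have := cardsC (cnbhd e u).
by rewrite cardsU1 inE eirr reg; lia.
Qed.

End PowerDomination.

Section CoDegreeTwo.
Variables (T : finType) (e : rel T).
Hypotheses (esym : symmetric e) (eirr : irreflexive e).
Hypothesis no_isolated : forall a, exists w, e a w.
Hypothesis codeg2 : forall u, #|~: cnbhd e u| = 2.

Lemma power_dominating_set1_iff (u : T) :
  power_dominating e [set u] <->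
  exists v, e u v /\ #|cnbhd e v :\: cnbhd e u| = 1.
Proof.
split.
  apply: power_dominating_set1_edge; apply/eqP => Nu.
  by have := codeg2 u; rewrite Nu setCT cards0.
case=> v [uv /eqP/cards1P [x Dv]].
have vu : v \in cnbhd e u by rewrite !inE uv orbT.
have [a Nu] : exists a, ~: cnbhd e u = [set x; a].
  have : x \in cnbhd e v :\: cnbhd e u by rewrite Dv set11.
  by rewrite in_setD -in_setC => /andP [xNu _]; apply: cards2_set2.
have [w eaw] := no_isolated a.
have T_ge2 : 2 <= #|T| by rewrite -(codeg2 u) max_card.
rewrite /power_dominating cnbhd_set1; apply/eqP.
apply: (closure_eqT T_ge2) => /=.
exact: force_step_setC1 esym eirr eaw (force_step_cnbhd vu Nu Dv).
Qed.

End CoDegreeTwo.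

Theorem mainTheorem8 (T : finType) (e : rel T) :
  simple_graph e -> connected_graph e -> 5 <= #|T| ->
  regular e (#|T| - 3) ->
  (power_domination_number e = 1 <->
   exists u v : T, e u v /\ #|cnbhd e v :\: cnbhd e u| = 1).
Proof.
move=> [esym eirr] _ T_ge5 reg.
have codeg2 u : #|~: cnbhd e u| = 2.
  by apply: card_setC_cnbhd_regular eirr _ reg; lia.
have no_isolated a : exists w, e a w.
  have /card_gt0P [w] : 0 < #|onbhd e a| by rewrite reg; lia.
  by rewrite inE; exists w.
rewrite power_domination_number_eq1; last lia.
have PD1 := power_dominating_set1_iff esym eirr no_isolated codeg2.
by split=> -[u PDu]; exists u; apply/PD1.
Qed.
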